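(* Let $C_n$ be the cycle on $n\geq 3$ vertices. Then $\gamma_{gr}^{2}(C_n)=n-1$, $\gamma_{gr}^{L,2}(C_n)=n$, $\gamma_{gr}^{Z,2}(C_n)=n-1$, and $\gamma_{gr}^{t,2}(C_n)=n$.
   Context: For a vertex $v$, $N(v)$ is its open neighborhood and $N[v]=N(v)\cup\{v\}$. Let $k$ be a positive integer. A sequence $S=(v_1,\ldots,v_m)$ of distinct vertices is a $k$-sequence (resp. $k$-$L$-sequence, $k$-$Z$-sequence, $k$-$t$-sequence) if for each $i\in[m]$ there is a vertex $u_i$ with $u_i\in N[v_i]$ (resp. $N[v_i]$, $N(v_i)$, $N(v_i)$) such that the number of indices $j<i$ with $u_i\in N[v_j]$ (resp. $N(v_j)$, $N[v_j]$, $N(v_j)$) is less than $k$. The numbers $\gamma_{gr}^{k}(G)$, $\gamma_{gr}^{L,k}(G)$, $\gamma_{gr}^{Z,k}(G)$, $\gamma_{gr}^{t,k}(G)$ are the maximum lengths of such sequences, respectively. *)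

From mathcomp Require Import all_boot all_order.
Set Implicit Arguments. Unset Strict Implicit. Unset Printing Implicit Defensive.

Definition simple_graph (T : finType) (e : rel T) : Prop :=
  symmetric e /\ irreflexive e.

Definition inN (T : finType) (e : rel T) (v u : T) : bool := e v u.
Definition inNc (T : finType) (e : rel T) (v u : T) : bool := (u == v) || e v u.

(* Generic sequence condition parameterized by the two neighbourhood kinds:
   [na] is used for "u_i in N_a[v_i]", [nb] for "u_i in N_b(v_j)". *)
Definition gseq (T : finType) (na nb : T -> T -> bool) (k : nat) (s : seq T) : bool :=
  uniq s &&
  [forall i : 'I_(size s),
     [exists u : T,
        na (nth u s i) u &&
        (#|[set j : 'I_(size s) | (j < i) && nb (nth u s j) u]| < k)]].

Definition kseq  T e k s := @gseq T (inNc e) (inNc e) k s.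
Definition kLseq T e k s := @gseq T (inNc e) (inN e) k s.
Definition kZseq T e k s := @gseq T (inN e) (inNc e) k s.
Definition ktseq T e k s := @gseq T (inN e) (inN e) k s.

(* maximum length of a sequence satisfying P (sequences of distinct vertices
   have length at most #|T|); 0 if none. *)
Definition max_len (T : finType) (P : seq T -> bool) : nat :=
  \max_(m < #|T|.+1 | [exists t : m.-tuple T, P t]) m.

Definition gamma_gr  T e k := max_len (@kseq T e k).
Definition gamma_grL T e k := max_len (@kLseq T e k).
Definition gamma_grZ T e k := max_len (@kZseq T e k).
Definition gamma_grt T e k := max_len (@ktseq T e k).

(* The cycle C_n on vertex set 'I_n: i ~ j iff j = i+1 mod n or i = j+1 mod n
   (and i <> j). For n >= 3 this is the usual cycle. *)
Definition cycle_rel (n : nat) : rel 'I_n :=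
  fun i j => (i != j) && ((j == (i.+1 %% n) :> nat) || (i == (j.+1 %% n) :> nat)).
Arguments cycle_rel n%_nat_scope _ _ : clear implicits.

From mathcomp Require Import all_boot all_order.
From mathcomp Require Import zify.

(* Upper bounds: a sequence of distinct vertices has at most n terms, and with
   closed neighbourhoods counted on the earlier side (the k- and Z-sequences) it
   cannot contain every vertex of C_n, because the vertex u_n chosen for the
   last term has three closed neighbours, two of which already occurred.
   Lower bounds: the vertices 0, 1, 2, ... in cyclic order, each with
   u_i = i + 1, form a t-sequence of length n (and hence an L-sequence) and,
   stopped before the last vertex, a Z-sequence (and hence a k-sequence) of
   length n - 1: only i + 2 can be an earlier neighbour of i + 1. *)

Section GreedySequences.

Context {T : finType}.
Implicit Types (na nb : rel T) (s : seq T).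

Lemma gseq_size_le_card {na nb k s} : gseq na nb k s -> size s <= #|T|.
Proof. by case/andP => /card_uniqP <- _; apply: max_card. Qed.

Lemma inN_sub_inNc (e : rel T) : subrel (inN e) (inNc e).
Proof. by move=> v u; rewrite /inNc /inN => ->; rewrite orbT. Qed.

Lemma sub_gseq {na na' nb k s} : subrel na na' -> gseq na nb k s -> gseq na' nb k s.
Proof.
move=> sub_na /andP[uniq_s /forallP choice_s]; rewrite /gseq uniq_s /=.
apply/forallP => i; have /existsP[u /andP[na_u few_u]] := choice_s i.
by apply/existsP; exists u; rewrite few_u sub_na.
Qed.

Lemma gseq_size_lt_card {na nb k s} : 0 < #|T| ->
  (forall u, k < #|[set w | nb w u]|) -> gseq na nb k s -> size s < #|T|.
Proof.
move=> T_gt0 big_nb gs; rewrite ltn_neqAle (gseq_size_le_card gs) andbT.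
apply/negP => /eqP full; case/andP: gs => uniq_s /forallP choice_s.
have s_total x : x \in s.
  have card_s : #|s| = #|T| by rewrite (card_uniqP uniq_s).
  by rewrite (subset_cardP card_s (subset_predT _)).
have last_lt : (size s).-1 < size s by rewrite ltn_predL full.
have /existsP[u /andP[_ few_u]] := choice_s (Ordinal last_lt).
set J := [set j | _] in few_u; set v := nth u s (size s).-1.
have nb_sub : [set w | nb w u] \subset v |: [set nth u s j | j : 'I_(size s) in J].
  apply/subsetP => w; rewrite !inE => nb_wu; case: eqP => //= w_neq_v.
  have idx_lt : index w s < size s by rewrite index_mem.
  have idx_earlier : index w s < (size s).-1.
    rewrite ltn_neqAle -ltnS prednK ?idx_lt ?andbT; last exact: leq_ltn_trans idx_lt.
    by apply/eqP => idx_last; apply: w_neq_v; rewrite /v -idx_last nth_index.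
  apply/imsetP; exists (Ordinal idx_lt); last by rewrite nth_index.
  by rewrite inE /= nth_index // idx_earlier nb_wu.
have : #|[set w | nb w u]| <= #|J|.+1.
  apply: leq_trans (subset_leq_card nb_sub) _.
  by rewrite cardsU1 -add1n leq_add ?leq_b1 ?leq_imset_card.
by move/leq_trans/(_ few_u); rewrite leqNgt big_nb.
Qed.

Lemma max_len_eq {P : seq T -> bool} {L} : (forall s, P s -> size s <= L) ->
  (exists2 s, P s & size s = L) -> L <= #|T| -> max_len P = L.
Proof.
move=> bound [s Ps size_s] le_L_T; subst L; apply/eqP; rewrite eqn_leq; apply/andP; split.
  by apply/bigmax_leqP => m /existsP[t /bound]; rewrite size_tuple.
have lt_s : size s < #|T|.+1 by [].
apply: (@leq_bigmax_cond _ _ _ (Ordinal lt_s)); apply/existsP.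
by exists (in_tuple s).
Qed.

End GreedySequences.

Lemma size_take_enum {n L} : L <= n -> size (take L (enum 'I_n)) = L.
Proof. by move=> le_L_n; rewrite size_takel ?size_enum_ord. Qed.

Lemma gseq_take_enum n (na nb : rel 'I_n) k L : L <= n ->
  (forall i : 'I_n, i < L -> exists2 u, na i u & #|[set j : 'I_n | (j < i) && nb j u]| < k) ->
  gseq na nb k (take L (enum 'I_n)).
Proof.
move=> le_L_n pick_u; set s := take L (enum 'I_n).
have size_s : size s = L by apply: size_take_enum.
have le_s_n : size s <= n by rewrite size_s.
have nth_s x0 (j : 'I_(size s)) : nth x0 s j = widen_ord le_s_n j.
  have lt_j_L : j < L by rewrite -size_s.
  by apply: val_inj; rewrite /= nth_take // nth_enum_ord // (leq_trans lt_j_L).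
have uniq_s : uniq s by rewrite take_uniq ?enum_uniq.
rewrite /gseq uniq_s; apply/forallP => i.
have lt_i_L : i < L by rewrite -size_s.
have [u na_u few_u] := pick_u (widen_ord le_s_n i) lt_i_L.
apply/existsP; exists u; rewrite nth_s na_u /=.
have widen_inj : injective (widen_ord le_s_n).
  by move=> j j' /(congr1 (@nat_of_ord n)) /= /val_inj.
rewrite -(card_imset _ widen_inj); apply: leq_ltn_trans few_u; apply: subset_leq_card.
by apply/subsetP => _ /imsetP[j + ->]; rewrite !inE nth_s.
Qed.

Section Cycle.

Context {n : nat}.
Implicit Types i j u : 'I_n.

Lemma cycle_relE i j : cycle_rel n i j = (i != j) && ((j == ordS i) || (i == ordS j)).
Proof. by []. Qed.

Lemma cycle_rel_sym : symmetric (cycle_rel n).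
Proof. by move=> i j; rewrite !cycle_relE eq_sym orbC. Qed.

Lemma val_ordS i : ordS i = (if i.+1 < n then i.+1 else 0) :> nat.
Proof.
case: ltnP => [lt_in|]; first by rewrite /= modn_small.
by rewrite /= => le_ni; rewrite (@anti_leq i.+1 n) ?ltn_ord ?modnn.
Qed.

Lemma ordS_neq i : 1 < n -> i != ordS i.
Proof.
move=> n_gt1; apply/eqP => /(congr1 (@nat_of_ord n)); rewrite val_ordS.
by have := ltn_ord i; case: ifP; lia.
Qed.

Lemma ordS2_neq i : 2 < n -> i != ordS (ordS i).
Proof.
move=> n_gt2; apply/eqP => /(congr1 (@nat_of_ord n)); rewrite !val_ordS.
by have := ltn_ord i; do 2 case: ifP; lia.
Qed.

Lemma cycle_rel_ordS i : 1 < n -> cycle_rel n i (ordS i).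
Proof. by move=> n_gt1; rewrite cycle_relE ordS_neq ?eqxx. Qed.

Lemma cycle_rel_ordSr i j : cycle_rel n j (ordS i) -> (j == i) || (j == ordS (ordS i)).
Proof. by rewrite cycle_relE => /andP[_]; rewrite (inj_eq (@ordS_inj n)) eq_sym. Qed.

Lemma cycle_closed_nbhd_card u : 2 < n -> 2 < #|[set w | inNc (cycle_rel n) w u]|.
Proof.
move=> n_gt2; have n_gt1 := ltnW n_gt2.
rewrite -(ord_predK u); set p := ord_pred u.
have nbhd : [set p; ordS p; ordS (ordS p)] \subset [set w | inNc (cycle_rel n) w (ordS p)].
  apply/subsetP => w; rewrite !inE /inNc => /orP[/orP[]|] /eqP->.
  - by rewrite cycle_rel_ordS ?orbT.
  - by rewrite eqxx.
  - by rewrite cycle_rel_sym cycle_rel_ordS ?orbT.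
apply: leq_trans (subset_leq_card nbhd).
by rewrite -setUA cardsU1 cards2 !inE negb_or ordS_neq // ordS2_neq // ordS_neq.
Qed.

Lemma cycle_open_earlier_card i :
  #|[set j : 'I_n | (j < i) && cycle_rel n j (ordS i)]| < 2.
Proof.
rewrite ltnS -(cards1 (ordS (ordS i))); apply: subset_leq_card; apply/subsetP => j.
rewrite !inE => /andP[lt_ji /cycle_rel_ordSr/orP[/eqP eq_ji|//]].
by rewrite eq_ji ltnn in lt_ji.
Qed.

Lemma cycle_closed_earlier_card i : i.+1 < n ->
  #|[set j : 'I_n | (j < i) && inNc (cycle_rel n) j (ordS i)]| < 2.
Proof.
move=> lt_in; apply: leq_ltn_trans (cycle_open_earlier_card i).
apply: subset_leq_card; apply/subsetP => j; rewrite !inE /inNc.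
case/andP => lt_ji /orP[/eqP ordS_eq|->]; last by rewrite lt_ji.
by move: lt_ji; rewrite -ordS_eq val_ordS lt_in ltnNge leqnSn.
Qed.

Lemma ktseq_cycle : 1 < n -> ktseq (cycle_rel n) 2 (take n (enum 'I_n)).
Proof.
move=> n_gt1; apply: gseq_take_enum => // i _.
by exists (ordS i); [apply: cycle_rel_ordS | apply: cycle_open_earlier_card].
Qed.

Lemma kZseq_cycle : 2 < n -> kZseq (cycle_rel n) 2 (take n.-1 (enum 'I_n)).
Proof.
move=> n_gt2; apply: gseq_take_enum => [|i lt_i]; first exact: leq_pred.
exists (ordS i); first by apply: cycle_rel_ordS; apply: ltnW.
by apply: cycle_closed_earlier_card; rewrite -ltn_predRL.
Qed.

Lemma kseq_cycle_size (n_gt2 : 2 < n) s : kseq (cycle_rel n) 2 s -> size s < n.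
Proof.
rewrite -[n in _ < n]card_ord; apply: gseq_size_lt_card (cycle_closed_nbhd_card^~ n_gt2).
by rewrite card_ord (ltn_trans _ n_gt2).
Qed.

End Cycle.

Theorem mainTheorem5 (n : nat) (hn : 3 <= n) :
  [/\ gamma_gr (cycle_rel n) 2 = n.-1,
      gamma_grL (cycle_rel n) 2 = n,
      gamma_grZ (cycle_rel n) 2 = n.-1
    & gamma_grt (cycle_rel n) 2 = n].
Proof.
have k_bound s : kseq (cycle_rel n) 2 s -> size s <= n.-1.
  by move/(kseq_cycle_size hn) => lt_s_n; rewrite -ltnS (ltn_predK hn).
have Z_bound s : kZseq (cycle_rel n) 2 s -> size s <= n.-1.
  by move/(sub_gseq (inN_sub_inNc _)); apply: k_bound.
have card_bound (na nb : rel 'I_n) s : gseq na nb 2 s -> size s <= n.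
  by move/gseq_size_le_card; rewrite card_ord.
have kZ := kZseq_cycle hn; have kt := ktseq_cycle (ltnW hn).
have size_kZ := size_take_enum (leq_pred n); have size_kt := size_take_enum (leqnn n).
split.
- apply: (max_len_eq k_bound); last by rewrite card_ord leq_pred.
  by exists (take n.-1 (enum 'I_n)); first exact: sub_gseq (inN_sub_inNc _) kZ.
- apply: (max_len_eq (card_bound _ _)); last by rewrite card_ord.
  by exists (take n (enum 'I_n)); first exact: sub_gseq (inN_sub_inNc _) kt.
- apply: (max_len_eq Z_bound); last by rewrite card_ord leq_pred.
  by exists (take n.-1 (enum 'I_n)).
- apply: (max_len_eq (card_bound _ _)); last by rewrite card_ord.
  by exists (take n (enum 'I_n)).
Qed.
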